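(* Run WSU-UX with $K=2$ and any valid $(\eta,\gamma)$ on the two-phase loss sequence, and assume $\Pr(\mathcal E_2)>0$. Let $t_0=T_1+T_2+1$, let $1\le\tau\le T_3+T_4$ and $t=t_0+\tau$. Then $$\mathbb{E}[\pi_{t,2}\mid\mathcal E_2]\le\frac34\exp\Bigl(-\frac{\eta}{4}\tau\Bigr).$$
   Context: WSU-UX. Fix integers $K\ge 2$ and $T\ge 1$ and hyperparameters $\eta,\gamma$. The pair $(\eta,\gamma)$ is called valid if $\eta,\gamma\in(0,1/2)$ and $\eta K/\gamma\le 1/2$. Given a fixed loss sequence $\ell_t\in[0,1]^K$, WSU-UX sets $\pi_{1,i}=1/K$ and in each round $t$: forms $\tilde\pi_{t,i}=(1-\gamma)\pi_{t,i}+\gamma/K$; draws $I_t$ with $\Pr(I_t=i\mid\mathcal F_{t-1})=\tilde\pi_{t,i}$; sets $\hat\ell_{t,i}=\ell_{t,i}\mathbf 1[I_t=i]/\tilde\pi_{t,i}$; and updates $\pi_{t+1,i}=\pi_{t,i}\bigl(1-\eta(\hat\ell_{t,i}-\sum_{j}\pi_{t,j}\hat\ell_{t,j})\bigr)$; $\mathcal F_t$ is the history generated by $I_1,\dots,I_t$. Two-phase loss sequence ($K=2$, $T$ a multiple of $100$): with $T_1=\frac{T}{100}$, $\ell_{t,1}=1,\ell_{t,2}=0$ for $1\le t\le T_1$ and $\ell_{t,1}=0,\ell_{t,2}=1$ for $T_1<t\le T$. Further set $T_2=\frac{2}{10}T$, $T_3=\frac1{10}T$, $T_4=\frac{69}{100}T$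 (so $T_1+T_2+T_3+T_4=T$). $\mathcal E_2$ denotes the event $\{\pi_{T_1+T_2+1,1}\ge\frac14\}$. *)

From HB Require Import structures.
From mathcomp Require Import all_boot all_order all_algebra.
From mathcomp Require Import all_classical all_reals all_analysis.
Set Implicit Arguments. Unset Strict Implicit. Unset Printing Implicit Defensive.
Import Order.TTheory GRing.Theory Num.Theory.
Local Open Scope ring_scope.

Section WSUUX.
Variables (R : realType) (K : nat) (eta gamma : R).
(* loss t i : loss of arm i at round t (rounds are 1-indexed) *)
Variable loss : nat -> 'I_K -> R.

Definition valid_params : Prop :=
  0 < eta < 1/2 /\ 0 < gamma < 1/2 /\ eta * K%:R / gamma <= 1/2.

Definition mix (p : 'I_K -> R) (i : 'I_K) : R := (1 - gamma) * p i + gamma / K%:R.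

Definition lhat (t : nat) (p : 'I_K -> R) (Ia : 'I_K) (i : 'I_K) : R :=
  loss t i * (Ia == i)%:R / mix p i.

Definition update (t : nat) (p : 'I_K -> R) (Ia : 'I_K) (i : 'I_K) : R :=
  p i * (1 - eta * (lhat t p Ia i - \sum_(j < K) p j * lhat t p Ia j)).

Fixpoint run (t : nat) (p : 'I_K -> R) (s : seq 'I_K) : 'I_K -> R :=
  match s with
  | [::] => p
  | a :: s' => run t.+1 (update t p a) s'
  end.

Definition pi1 : 'I_K -> R := fun _ => 1 / K%:R.

(* pi_of h = pi_t where h = [:: I_1; ...; I_(t-1)] is the history *)
Definition pi_of (h : seq 'I_K) : 'I_K -> R := run 1 pi1 h.

(* probability of the history s = [:: I_t; I_(t+1); ...] given current round t
   and weights p: product of the sampling probabilities ~pi_{k,I_k} *)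
Fixpoint prob_run (t : nat) (p : 'I_K -> R) (s : seq 'I_K) : R :=
  match s with
  | [::] => 1
  | a :: s' => mix p a * prob_run t.+1 (update t p a) s'
  end.

Definition hist_prob (h : seq 'I_K) : R := prob_run 1 pi1 h.
End WSUUX.

(* Two-phase loss sequence, K = 2, arms 1,2 are ord0, ord_max (i.e. 0 and 1). *)
Definition T1 (T : nat) : nat := T %/ 100.
Definition T2 (T : nat) : nat := (2 * T) %/ 10.
Definition T3 (T : nat) : nat := T %/ 10.
Definition T4 (T : nat) : nat := (69 * T) %/ 100.

Definition two_phase_loss {R : realType} (T : nat) (t : nat) (i : 'I_2) : R :=
  if (t <= T1 T)%N then (if i == ord0 then 1 else 0)
  else (if i == ord0 then 0 else 1).

Section Prob.
Variables (R : realType) (T : nat) (eta gamma : R).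
Notation L := (@two_phase_loss R T).

(* sample space: full histories (I_1,...,I_T) *)
Definition Pw (w : T.-tuple 'I_2) : R := hist_prob eta gamma L w.

(* pi_t evaluated on the history w (uses I_1..I_(t-1)) *)
Definition pi_at (t : nat) (w : T.-tuple 'I_2) : 'I_2 -> R :=
  pi_of eta gamma L (take t.-1 w).

Definition E2 (w : T.-tuple 'I_2) : bool := 1/4 <= pi_at (T1 T + T2 T).+1 w ord0.

Definition PrE2 : R := \sum_(w : T.-tuple 'I_2 | E2 w) Pw w.

Definition cond_exp_pi2 (t : nat) : R :=
  (\sum_(w : T.-tuple 'I_2 | E2 w) Pw w * pi_at t w ord_max) / PrE2.
End Prob.

From Pilot Require Import Defs.
From HB Require Import structures.
From mathcomp Require Import all_boot all_order all_algebra.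
From mathcomp Require Import all_classical all_reals all_analysis.
From mathcomp Require Import ring lra zify.
Import Order.TTheory GRing.Theory Num.Theory.
Set Implicit Arguments.
Unset Strict Implicit.
Unset Printing Implicit Defensive.
Local Open Scope ring_scope.

(** After round [T1] only arm 2 is charged, so a draw of arm 1 leaves the
    weights unchanged and a draw of arm 2 moves weight from arm 2 to arm 1.
    Hence [pi_{t,1}] never decreases in phase two, and the conditional
    expectation of [pi_{t+1,2}] given the past is [pi_{t,2} - eta pi_{t,1} pi_{t,2}].
    On [E_2] we have [pi_{t,1} >= 1/4] from [t0] on, so [pi_{t,2}] contracts in
    expectation by the factor [1 - eta/4] per round, starting from
    [pi_{t0,2} <= 3/4].  As [E_2] is determined by the first [T1 + T2] draws,
    conditioning on it only averages this bound over those draws; finally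
    [(1 - eta/4)^tau <= exp (- eta tau / 4)]. *)

Lemma sum_tuple_cons (V : nmodType) (A : finType) n (G : n.+1.-tuple A -> V) :
  \sum_(w : n.+1.-tuple A) G w = \sum_(a : A) \sum_(w : n.-tuple A) G (cons_tuple a w).
Proof.
rewrite pair_big /= (reindex (fun x : A * n.-tuple A => cons_tuple x.1 x.2)) //=.
exists (fun w : n.+1.-tuple A => (thead w, behead_tuple w)).
- by move=> [a w] _; congr pair; apply/val_inj.
- by move=> w _; apply/val_inj; rewrite /= [in RHS](tuple_eta w).
Qed.

Lemma sum_tuple0 (V : nmodType) (A : finType) (G : 0.-tuple A -> V) :
  \sum_(w : 0.-tuple A) G w = G [tuple].
Proof. by rewrite (big_pred1 [tuple]) // => w; rewrite /= (tuple0 w); apply/esym/eqP. Qed.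

Lemma big_ord2 (V : nmodType) (F : 'I_2 -> V) : \sum_(i < 2) F i = F ord0 + F ord_max.
Proof. by rewrite !big_ord_recl big_ord0 addr0; congr (_ + F _); apply/val_inj. Qed.

Lemma ord2P (i : 'I_2) : i = ord0 \/ i = ord_max.
Proof. by case: i => [[|[|n]]] Hi; [left|right|]; try apply/val_inj. Qed.

Lemma exprn_1sub_le_expR (R : realType) (x : R) n :
  x <= 1 -> (1 - x) ^+ n <= expR (- x * n%:R).
Proof.
move=> x1; rewrite expRM_natr; apply: lerXn2r; rewrite ?nnegrE ?subr_ge0 //.
by have := expR_ge1Dx (- x); rewrite addrC.
Qed.

Section Wsuux.
Variables (R : realType) (K : nat) (eta gamma : R) (loss : nat -> 'I_K -> R).
Hypothesis hvalid : valid_params K eta gamma.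
Hypothesis loss01 : forall t i, 0 <= loss t i <= 1.

Let eta_gt0 : 0 < eta. Proof. by case: hvalid => /andP[]. Qed.

Local Notation mix := (@mix R K gamma).
Local Notation lhat := (@lhat R K gamma loss).
Local Notation update := (@update R K eta gamma loss).
Local Notation run := (@run R K eta gamma loss).

Definition simplex (p : 'I_K -> R) : Prop := (forall i, 0 <= p i) /\ \sum_i p i = 1.

Lemma simplex_dim_gt0 p : simplex p -> (0 < K)%N.
Proof.
case=> _; rewrite lt0n; apply: contra_eqN => /eqP K0.
rewrite big_pred0 => [|i]; first by rewrite eq_sym oner_eq0.
by have := ltn_ord i; rewrite {2}K0.
Qed.

Lemma simplex_pi1 : (0 < K)%N -> simplex (@pi1 R K).
Proof.
move=> K0; split=> [i|]; first by rewrite /pi1 divr_ge0 ?ler0n.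
by rewrite /pi1 sumr_const card_ord div1r -[_ *+ K]mulr_natr mulVf // pnatr_eq0 -lt0n.
Qed.

Lemma mix_ge p i : (forall j, 0 <= p j) -> gamma / K%:R <= mix p i.
Proof.
case: hvalid => _ [/andP[_ g1] _] p0.
by rewrite /mix lerDr mulr_ge0 ?p0 // subr_ge0; lra.
Qed.

Lemma mix_gt0 p i : (forall j, 0 <= p j) -> 0 < mix p i.
Proof.
move=> p0; apply: lt_le_trans (mix_ge i p0).
case: hvalid => _ [/andP[g0 _] _].
by rewrite divr_gt0 // ltr0n (leq_ltn_trans _ (ltn_ord i)).
Qed.

Lemma sum_mix p : simplex p -> \sum_i mix p i = 1.
Proof.
move=> hp; have K0 := simplex_dim_gt0 hp; case: hp => _ hs.
rewrite big_split /= -mulr_sumr hs sumr_const card_ord -[_ *+ K]mulr_natr mulfVK.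
  by rewrite mulr1 subrK.
by rewrite pnatr_eq0 -lt0n.
Qed.

Lemma lhat_ge0 t p a i : (forall j, 0 <= p j) -> 0 <= lhat t p a i.
Proof.
move=> p0; have /andP[l0 _] := loss01 t i.
by rewrite divr_ge0 ?mulr_ge0 ?ler0n // ltW // mix_gt0.
Qed.

Lemma eta_lhat_le t p a i : (forall j, 0 <= p j) -> eta * lhat t p a i <= 1/2.
Proof.
move=> p0; have m0 := mix_gt0 i p0; have lhat0 := lhat_ge0 t a i p0.
case: hvalid => /andP[e0 _] [/andP[g0 _] hK].
have K0 : 0 < K%:R :> R by rewrite ltr0n (leq_ltn_trans _ (ltn_ord i)).
have lhat_mix : lhat t p a i * mix p i <= 1.
  have /andP[_ l1] := loss01 t i.
  by rewrite divfK ?(gt_eqF m0) //; case: (a == i); rewrite ?mulr1 ?mulr0.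
have lhatK : lhat t p a i <= K%:R / gamma.
  have := le_trans (ler_wpM2l lhat0 (mix_ge i p0)) lhat_mix.
  by rewrite mulrA ler_pdivrMr // mul1r ler_pdivlMr.
by apply: le_trans hK; rewrite -mulrA ler_wpM2l // ltW.
Qed.

Lemma simplex_update t p a : simplex p -> simplex (update t p a).
Proof.
case=> p0 hs; set S := \sum_j p j * lhat t p a j.
have S0 : 0 <= S by apply: sumr_ge0 => j _; rewrite mulr_ge0 // lhat_ge0.
split=> [i|].
  have := eta_lhat_le t a i p0; have := mulr_ge0 (ltW eta_gt0) S0.
  by rewrite /Defs.update -/S => etaS0 etal; rewrite mulr_ge0 // mulrBr; lra.
have -> : \sum_i update t p a i = \sum_i (p i - eta * (p i * lhat t p a i) + eta * S * p i).
  by apply: eq_bigr => i _; rewrite /Defs.update -/S; ring.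
by rewrite big_split sumrB /= -!mulr_sumr -/S hs; ring.
Qed.

Lemma simplex_run t p s : simplex p -> simplex (run t p s).
Proof. by elim: s t p => [|a s IH] t p hp //=; apply/IH/simplex_update. Qed.

Lemma run_cat t p s1 s2 : run t p (s1 ++ s2) = run (t + size s1) (run t p s1) s2.
Proof. by elim: s1 t p => [|a s1 IH] t p /=; rewrite ?addn0 // IH addSnnS. Qed.

(* Expectation of [F] over the next [k] draws of WSU-UX started in round [t]
   from weights [p]; [F] is applied to the sequence of drawn arms. *)
Fixpoint Erun (k t : nat) (p : 'I_K -> R) (F : seq 'I_K -> R) : R :=
  if k is k'.+1 then \sum_a mix p a * Erun k' t.+1 (update t p a) (fun s => F (a :: s))
  else F [::].

Lemma sum_prob_run k t p (F : seq 'I_K -> R) :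
  \sum_(w : k.-tuple 'I_K) prob_run eta gamma loss t p w * F w = Erun k t p F.
Proof.
elim: k t p F => [|k IH] t p F; first by rewrite sum_tuple0 mul1r.
rewrite sum_tuple_cons /=; apply: eq_bigr => a _.
by rewrite -IH mulr_sumr; apply: eq_bigr => w _; rewrite mulrA.
Qed.

Lemma sum_prob_run_event k t p (P : pred (seq 'I_K)) (F : seq 'I_K -> R) :
  \sum_(w : k.-tuple 'I_K | P w) prob_run eta gamma loss t p w * F w
  = Erun k t p (fun s => (P s)%:R * F s).
Proof.
rewrite big_mkcond -sum_prob_run; apply: eq_bigr => w _.
by case: (P w); rewrite ?mul1r ?mul0r ?mulr0.
Qed.

Lemma sum_prob_run_event1 k t p (P : pred (seq 'I_K)) :
  \sum_(w : k.-tuple 'I_K | P w) prob_run eta gamma loss t p w = Erun k t p (fun s => (P s)%:R).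
Proof.
rewrite big_mkcond -sum_prob_run; apply: eq_bigr => w _.
by case: (P w); rewrite ?mulr1 ?mulr0.
Qed.

Lemma Erun_eq_size k t p F G :
  (forall s, size s = k -> F s = G s) -> Erun k t p F = Erun k t p G.
Proof.
elim: k t p F G => [|k IH] t p F G FG /=; first exact: FG.
by apply: eq_bigr => a _; congr (_ * _); apply: IH => s hs; apply: FG; rewrite /= hs.
Qed.

Lemma Erun_le_size k t p F G : simplex p ->
  (forall s, size s = k -> F s <= G s) -> Erun k t p F <= Erun k t p G.
Proof.
elim: k t p F G => [|k IH] t p F G hp FG /=; first exact: FG.
apply: ler_sum => a _; apply: ler_wpM2l; first exact: ltW (mix_gt0 a hp.1).
by apply: IH => [|s hs]; [apply: simplex_update | apply: FG; rewrite /= hs].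
Qed.

Lemma Erun_const k t p c : simplex p -> Erun k t p (fun=> c) = c.
Proof.
elim: k t p => [|k IH] t p hp //=.
under eq_bigr => a _ do rewrite (IH _ _ (simplex_update t a hp)).
by rewrite -mulr_suml sum_mix // mul1r.
Qed.

Lemma ErunZ k t p c F : Erun k t p (fun s => c * F s) = c * Erun k t p F.
Proof.
elim: k t p F => [|k IH] t p F //=.
by rewrite mulr_sumr; apply: eq_bigr => a _; rewrite IH mulrCA.
Qed.

Lemma Erun_split k m t p F : Erun (k + m) t p F
  = Erun k t p (fun s => Erun m (t + k) (run t p s) (fun s' => F (s ++ s'))).
Proof.
elim: k t p F => [|k IH] t p F /=; first by rewrite addn0.
by apply: eq_bigr => a _; rewrite IH addSnnS.
Qed.

Lemma Erun_take k m t p F : simplex p -> (k <= m)%N ->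
  Erun m t p (fun s => F (take k s)) = Erun k t p F.
Proof.
move=> hp /subnKC <-; rewrite Erun_split; apply: Erun_eq_size => s hs.
under Erun_eq_size => s' _ do rewrite take_cat hs ltnn subnn take0 cats0.
by rewrite Erun_const //; apply: simplex_run.
Qed.

Lemma Erun_prefix_event_le n k t p (E : pred (seq 'I_K)) F c :
  simplex p -> (n <= k)%N ->
  (forall s, size s = n -> E s ->
     Erun (k - n) (t + n) (run t p s) (fun s' => F (s ++ s')) <= c) ->
  Erun k t p (fun s => (E (take n s))%:R * F s)
  <= c * Erun k t p (fun s => (E (take n s))%:R).
Proof.
move=> hp hnk hF; rewrite (Erun_take t (fun s => (E s)%:R) hp hnk).
rewrite -ErunZ -(subnKC hnk) Erun_split.
apply: Erun_le_size => // s hs.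
under Erun_eq_size => s' _ do rewrite take_cat hs ltnn subnn take0 cats0.
rewrite ErunZ; case hE: (E s); last by rewrite !mul0r mulr0.
by rewrite !mul1r mulr1 hF.
Qed.

End Wsuux.

Lemma two_phase_loss01 (R : realType) T t i : 0 <= @two_phase_loss R T t i <= 1.
Proof. by rewrite /two_phase_loss; case: ifP => _; case: ifP => _; rewrite ?lexx ?ler01. Qed.

Section TwoPhase.
Variables (R : realType) (T : nat) (eta gamma : R).
Hypothesis hvalid : valid_params 2 eta gamma.

Local Notation L := (@two_phase_loss R T).
Local Notation mix := (@mix R 2 gamma).
Local Notation update := (@update R 2 eta gamma L).
Local Notation run := (@run R 2 eta gamma L).
Local Notation Erun := (@Erun R 2 eta gamma L).
Local Notation simplex := (@simplex R 2).

Let eta_gt0 : 0 < eta. Proof. by case: hvalid => /andP[]. Qed.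
Let eta_lt1 : eta < 1. Proof. by case: hvalid => /andP[_ e1] _; lra. Qed.
Let loss01 := @two_phase_loss01 R T.

Lemma simplex2 p : simplex p -> p ord0 + p ord_max = 1.
Proof. by case=> _; rewrite big_ord2. Qed.

Section PhaseTwo.
Variable t : nat.
Hypothesis ht : (T1 T < t)%N.

Lemma update_draw_arm1 p : update t p ord0 =1 p.
Proof.
have lhat0 i : lhat gamma L t p ord0 i = 0.
  rewrite /lhat /two_phase_loss leqNgt ht /=.
  by case: (ord2P i) => ->; rewrite ?mul0r // mulr0 mul0r.
move=> i; rewrite /Defs.update big1 => [|j _]; last by rewrite lhat0 mulr0.
by rewrite lhat0 subr0 mulr0 subr0 mulr1.
Qed.

Lemma update_draw_arm2 p :
  update t p ord_max ord0 = p ord0 * (1 + eta * p ord_max / mix p ord_max) /\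
  update t p ord_max ord_max = p ord_max * (1 - eta * (1 - p ord_max) / mix p ord_max).
Proof.
rewrite /Defs.update /lhat /two_phase_loss leqNgt ht big_ord2 /=.
by split; congr (_ * _); ring.
Qed.

Lemma expected_update_arm2 p : simplex p ->
  \sum_a mix p a * update t p a ord_max = p ord_max - eta * p ord0 * p ord_max.
Proof.
move=> hp; have m1 : mix p ord_max != 0 by rewrite gt_eqF // (mix_gt0 hvalid _ hp.1).
have hm := sum_mix gamma hp; rewrite big_ord2 in hm.
rewrite big_ord2 update_draw_arm1; have [_ ->] := update_draw_arm2 p.
have -> : mix p ord0 = 1 - mix p ord_max by rewrite -hm addrK.
have -> : p ord0 = 1 - p ord_max by rewrite -(simplex2 hp) addrK.
by field.
Qed.

Lemma update_arm1_ge p a : simplex p -> p ord0 <= update t p a ord0.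
Proof.
move=> hp; case: (ord2P a) => ->; first by rewrite update_draw_arm1.
have [-> _] := update_draw_arm2 p; case: hp => p0 _.
rewrite ler_peMr // lerDl divr_ge0 ?mulr_ge0 ?(ltW eta_gt0) //.
exact: ltW (mix_gt0 hvalid _ p0).
Qed.

End PhaseTwo.

Lemma Erun_arm2_decay tau t q : (T1 T < t)%N -> simplex q -> 1/4 <= q ord0 ->
  Erun tau t q (fun s => run t q s ord_max) <= (1 - eta/4) ^+ tau * q ord_max.
Proof.
elim: tau t q => [|tau IH] t q ht hq hq0 /=; first by rewrite expr0 mul1r.
apply: le_trans (_ : \sum_a mix q a * ((1 - eta/4) ^+ tau * update t q a ord_max) <= _).
  apply: ler_sum => a _; apply: ler_wpM2l; first exact: ltW (mix_gt0 hvalid _ hq.1).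
  apply: IH; first exact: ltnW.
    exact: (simplex_update hvalid loss01).
  exact: le_trans hq0 (update_arm1_ge ht a hq).
under eq_bigr => a _ do rewrite mulrCA.
rewrite -mulr_sumr expected_update_arm2 // exprSr -[X in _ <= X]mulrA.
apply: ler_wpM2l; first by apply: exprn_ge0; have := eta_lt1; lra.
rewrite -subr_ge0 (_ : _ - _ = eta * q ord_max * (q ord0 - 1/4)); last by ring.
by rewrite !mulr_ge0 ?subr_ge0 ?(hq.1 ord_max) ?(ltW eta_gt0).
Qed.

Lemma Erun_arm2_le k tau t q : (T1 T < t)%N -> simplex q -> 1/4 <= q ord0 -> (tau <= k)%N ->
  Erun k t q (fun s => run t q (take tau s) ord_max) <= 3/4 * (1 - eta/4) ^+ tau.
Proof.
move=> ht hq hq0 htk; rewrite (Erun_take hvalid loss01 t (fun s => run t q s ord_max) hq htk).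
apply: le_trans (Erun_arm2_decay tau ht hq hq0) _.
rewrite mulrC; apply: ler_wpM2r; first by apply: exprn_ge0; have := eta_lt1; lra.
by have := simplex2 hq; lra.
Qed.
End TwoPhase.

Lemma two_phase_horizon T : (100 %| T)%N -> (T1 T + T2 T + T3 T + T4 T)%N = T.
Proof. by rewrite /T1 /T2 /T3 /T4; lia. Qed.

Theorem mainTheorem18 (R : realType) (T : nat) (eta gamma : R)
  (hT : (0 < T)%N) (h100 : (100 %| T)%N)
  (hvalid : valid_params 2 eta gamma)
  (hE2 : 0 < PrE2 T eta gamma)
  (tau : nat) (htau1 : (1 <= tau)%N) (htau2 : (tau <= T3 T + T4 T)%N) :
  cond_exp_pi2 T eta gamma ((T1 T + T2 T).+1 + tau)
    <= 3 / 4 * expR (- (eta / 4) * tau%:R).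
Proof.
set n := (T1 T + T2 T)%N; set L := @two_phase_loss R T.
set E := fun s : seq 'I_2 => 1/4 <= Defs.pi_of eta gamma L s ord0.
have loss01 := @two_phase_loss01 R T.
have hpi1 : simplex (@pi1 R 2) by apply: simplex_pi1.
have hnT : (n + tau <= T)%N by have := two_phase_horizon h100; lia.
rewrite /cond_exp_pi2 ler_pdivrMr //.
rewrite [PrE2 _ _ _](sum_prob_run_event1 _ _ _ T 1 _ (fun s => E (take n s))) in hE2 *.
rewrite (sum_prob_run_event _ _ _ T 1 _ (fun s => E (take n s))
  (fun s => Defs.pi_of eta gamma L (take (n + tau) s) ord_max)).
apply: le_trans (Erun_prefix_event_le hvalid loss01
  (c := 3/4 * (1 - eta/4) ^+ tau) hpi1 (leq_trans (leq_addr tau n) hnT) _) _.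
  move=> s hs hEs.
  under Erun_eq_size => s' _ do rewrite take_cat hs ltnNge leq_addr /= addKn /Defs.pi_of run_cat hs.
  apply: Erun_arm2_le => //; first by rewrite add1n ltnS leq_addr.
  - exact: (simplex_run hvalid loss01).
  - lia.
apply: ler_wpM2r; first exact: ltW.
apply: ler_wpM2l => //.
by apply: exprn_1sub_le_expR; case: hvalid => /andP[_ e1] _; lra.
Qed.
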